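(* Let $p_{NS}\in(0,1)$ and let $P$ be a semi-distribution on a finite set $\mathcal{I}$ with $a(P)>p_{NS}$. Consider minimizing $\mathrm{KL}_b(P\|Q)$ over the set $S$ of semi-distributions $Q$ with $a(Q)\le a(P)$ and $\sup(Q)\subseteq\sup(P)$. Then: (1) For any $Q_1\in S$ having an item $i$ with $Q_1(i)\in(0,p_{NS}]$, there is $Q_2\in S$ with $Q_2(j)>p_{NS}$ for all $j\in\sup(Q_2)$ and $\mathrm{KL}_b(P\|Q_2)<\mathrm{KL}_b(P\|Q_1)$. Consequently, it suffices to minimize over $S_2=\{Q\in S: a(Q)=a(P),\ Q(j)>p_{NS}\ \forall j\in\sup(Q)\}$, and $S_2$ is non-empty. (2) The set $S^*\subseteq S_2$ of minimizers of $\mathrm{KL}_b(P\|\cdot)$ is non-empty, and for every $Q^*\in S^*$ there is a multiple $r\ge1$ with $Q^*(i)=r\,P(i)$ for all $i\in\sup(Q^* )$. (3) For any minimizer $Q^*$ and any items $i,j$ with $P(i)<P(j)$: if $Q^*(i)>0$ then $Q^*(j)>0$ (and then $Q^*(j)>Q^*(i)$).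
   Context: A semi-distribution on $\mathcal{I}$ is $W:\mathcal{I}\to[0,1]$ with $a(W):=\sum_iW(i)\le1$ and support $\sup(W)=\{i:W(i)>0\}$. A semi-distribution $P$ is called non-degenerate with respect to $p_{NS}$ if $a(P)>p_{NS}$. Bounded KL: $\mathrm{KL}_b(P\|Q):=\sum_{i\in\sup(P)}P(i)\ln\frac{P(i)}{\max(Q(i),p_{NS})}$. *)

From HB Require Import structures.
From mathcomp Require Import all_boot all_order all_algebra.
From mathcomp Require Import reals exp.
Set Implicit Arguments. Unset Strict Implicit. Unset Printing Implicit Defensive.
Import Order.TTheory GRing.Theory Num.Theory.
Local Open Scope ring_scope.

Section Defs.
Variables (R : realType) (I : finType).

Definition semidist (W : I -> R) : Prop :=
  (forall i, 0 <= W i <= 1) /\ \sum_(i : I) W i <= 1.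

Definition mass (W : I -> R) : R := \sum_(i : I) W i.

Definition KLb (pNS : R) (P Q : I -> R) : R :=
  \sum_(i : I | 0 < P i) P i * ln (P i / Num.max (Q i) pNS).

Definition inS (P Q : I -> R) : Prop :=
  semidist Q /\ mass Q <= mass P /\ (forall i, 0 < Q i -> 0 < P i).

Definition inS2 (pNS : R) (P Q : I -> R) : Prop :=
  inS P Q /\ mass Q = mass P /\ (forall j, 0 < Q j -> pNS < Q j).

Definition is_minimizer (pNS : R) (P Q : I -> R) : Prop :=
  inS P Q /\ (forall Q', inS P Q' -> KLb pNS P Q <= KLb pNS P Q').

End Defs.

From HB Require Import structures.
From mathcomp Require Import all_boot all_order all_algebra.
From mathcomp Require Import perm reals exp.
From mathcomp Require Import ring lra.
Set Implicit Arguments. Unset Strict Implicit. Unset Printing Implicit Defensive.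
Import Order.TTheory GRing.Theory Num.Theory.
Local Open Scope ring_scope.

(* Let T be the set of items where a feasible Q exceeds pNS.  Off T the bounded
   KL only sees pNS, while on T the log-sum inequality and sum_T Q <= a(P) give
     KL_b(P || Q) >= P(T) ln (P(T) / a(P)) + sum_(i in sup(P) \ T) P(i) ln (P(i) / pNS),
   with equality only if Q = (a(P) / P(T)) P on T and Q = 0 elsewhere.  This
   rescaling of P attains the bound as soon as its entries exceed pNS, which
   holds for a minimizer T of the bound of least cardinality: an entry <= pNS
   could be dropped from T without increasing the bound.  So minimizers exist
   and are rescalings of P, and exchanging Q(i) and Q(j) strictly decreases
   KL_b when P(i) < P(j), Q(i) > pNS and Q(j) = 0. *)

Lemma ler_sum_mem (R : numDomainType) (I : finType) (A : {pred I}) (F : I -> R) k :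
  {in A, forall i, 0 <= F i} -> k \in A -> F k <= \sum_(i in A) F i.
Proof. by move=> F0 Ak; rewrite (bigD1 k) //= lerDl sumr_ge0 // => i /andP[/F0]. Qed.

Lemma psumr_mem_gt0 (R : numDomainType) (I : finType) (A : {pred I}) (F : I -> R) k :
  {in A, forall i, 0 < F i} -> k \in A -> 0 < \sum_(i in A) F i.
Proof.
by move=> F0 Ak; apply: lt_le_trans (F0 _ Ak) (ler_sum_mem _ Ak) => i /F0 /ltW.
Qed.

Section LnBounds.
Variable R : realType.

Lemma ln_le_subr1 (x : R) : 0 < x -> ln x <= x - 1.
Proof. by move=> x0; have := @le_ln1Dx R (x - 1); rewrite subrKC; apply; lra. Qed.

Lemma ln_lt_subr1 (x : R) : 0 < x -> x != 1 -> ln x < x - 1.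
Proof.
(* ln x = 2 ln z <= 2 (z - 1) < z ^ 2 - 1 for z = sqrt x <> 1. *)
move=> x0 x1; set z := Num.sqrt x.
have z0 : 0 < z by rewrite sqrtr_gt0.
have zz : z ^+ 2 = x by rewrite sqr_sqrtr // ltW.
have z1 : z != 1 by apply: contra x1 => /eqP z1; rewrite -zz z1 expr1n.
have lnz := ln_le_subr1 z0.
have sq : 0 < (z - 1) ^+ 2 by rewrite lt0r sqr_ge0 sqrf_eq0 subr_eq0 z1.
rewrite -zz lnXn //; move: sq lnz; rewrite mulr2n; nra.
Qed.

Lemma mul_ln_div_gapE (p x : R) : 0 < p -> 0 < x ->
  p * ln (p / x) - (p - x) = p * (x / p - 1 - ln (x / p)).
Proof.
move=> p0 x0; rewrite -[p / x]invf_div lnV ?posrE ?divr_gt0 //.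
by field; rewrite lt0r_neq0.
Qed.

Lemma subr_le_mul_ln_div (p x : R) : 0 < p -> 0 < x -> p - x <= p * ln (p / x).
Proof.
move=> p0 x0; rewrite -subr_ge0 mul_ln_div_gapE //.
by apply: mulr_ge0; [exact: ltW | rewrite subr_ge0 ln_le_subr1 ?divr_gt0].
Qed.

Lemma subr_lt_mul_ln_div (p x : R) : 0 < p -> 0 < x -> x != p ->
  p - x < p * ln (p / x).
Proof.
move=> p0 x0 xp; rewrite -subr_gt0 mul_ln_div_gapE //.
apply: mulr_gt0; rewrite // subr_gt0 ln_lt_subr1 ?divr_gt0 //.
by apply: contra xp => /eqP /divr1_eq ->.
Qed.

Lemma ler_mul_ln_div (a s t : R) : 0 < a -> 0 < s -> 0 < t ->
  (a * ln (a / t) <= a * ln (a / s)) = (s <= t).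
Proof.
move=> a0 s0 t0; rewrite ler_pM2l // ler_ln ?posrE ?divr_gt0 //.
by rewrite ler_pM2l // lef_pV2 ?posrE.
Qed.

Lemma ltr_mul_ln_div (a s t : R) : 0 < a -> 0 < s -> 0 < t ->
  (a * ln (a / t) < a * ln (a / s)) = (s < t).
Proof.
move=> a0 s0 t0; rewrite ltr_pM2l // ltr_ln ?posrE ?divr_gt0 //.
by rewrite ltr_pM2l // ltf_pV2 ?posrE.
Qed.

End LnBounds.

Section LogSum.
Variables (R : realType) (I : finType) (A : {pred I}) (p q : I -> R).
Hypotheses (p_gt0 : {in A, forall k, 0 < p k}) (q_gt0 : {in A, forall k, 0 < q k}).

Let sp := \sum_(k in A) p k.
Let sq := \sum_(k in A) q k.
(* [q] rescaled to the total mass of [p], so that the gaps [p k - q' k] sum to 0. *)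
Let q' k := q k * sp / sq.

Let q'_gt0 k : k \in A -> 0 < q' k.
Proof.
move=> Ak; rewrite /q' divr_gt0 ?mulr_gt0 ?q_gt0 //.
  exact: psumr_mem_gt0 p_gt0 Ak.
exact: psumr_mem_gt0 q_gt0 Ak.
Qed.

Lemma log_sum_gapE :
  \sum_(k in A) p k * ln (p k / q k) - sp * ln (sp / sq) =
  \sum_(k in A) (p k * ln (p k / q' k) - (p k - q' k)).
Proof.
case: (pickP [in A]) => [k0 Ak0 | A0]; last first.
  by rewrite /sp !big_pred0 // mul0r subr0.
have [sp0 sq0] := (psumr_mem_gt0 p_gt0 Ak0, psumr_mem_gt0 q_gt0 Ak0).
have sum_q' : \sum_(k in A) q' k = sp.
  by rewrite -mulr_suml -mulr_suml mulrC mulrA mulVf ?mul1r // lt0r_neq0.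
rewrite sumrB sumrB sum_q' subrr subr0 mulr_suml -sumrB; apply: eq_bigr => k Ak.
have [pk qk] := (p_gt0 Ak, q_gt0 Ak).
rewrite -mulrBr /q' -mulrA -ln_div ?posrE ?divr_gt0 //; congr (_ * ln _).
by field; rewrite !lt0r_neq0.
Qed.

Let gap_ge0 k : k \in A -> 0 <= p k * ln (p k / q' k) - (p k - q' k).
Proof. by move=> Ak; rewrite subr_ge0 subr_le_mul_ln_div ?p_gt0 ?q'_gt0. Qed.

Lemma log_sum_ge : sp * ln (sp / sq) <= \sum_(k in A) p k * ln (p k / q k).
Proof. by rewrite -subr_ge0 log_sum_gapE sumr_ge0. Qed.

Lemma log_sum_eq : \sum_(k in A) p k * ln (p k / q k) <= sp * ln (sp / sq) ->
  {in A, forall k, q k * sp = p k * sq}.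
Proof.
move=> le_sum k Ak.
have gap0 : \sum_(i in A) (p i * ln (p i / q' i) - (p i - q' i)) = 0.
  apply/eqP; rewrite eq_le sumr_ge0 ?andbT //.
  by rewrite -log_sum_gapE subr_le0.
have [q'k|] := eqVneq (q' k) (p k).
  by rewrite -q'k /q' divfK // lt0r_neq0 ?(psumr_mem_gt0 q_gt0 Ak).
move=> /(subr_lt_mul_ln_div (p_gt0 Ak) (q'_gt0 Ak)).
by rewrite -subr_gt0 (psumr_eq0P gap_ge0 gap0 Ak) ltxx.
Qed.

End LogSum.

Section Minimizers.
Variables (R : realType) (I : finType) (pNS : R) (P : I -> R).
Hypotheses (pNS_gt0 : 0 < pNS) (P_semidist : semidist P) (pNS_lt_mass : pNS < mass P).
Implicit Types (T : {set I}) (Q : I -> R).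

Definition supp : {set I} := [set k | 0 < P k].
Definition mass_on T : R := \sum_(k in T) P k.
Definition above Q : {set I} := [set k | pNS < Q k].
Definition rescaled T (k : I) : R :=
  if k \in T then mass P / mass_on T * P k else 0.

(* The value of KLb at [rescaled T] when all entries of [rescaled T] on T exceed pNS. *)
Definition klb_bound T : R :=
  mass_on T * ln (mass_on T / mass P) + \sum_(k in supp :\: T) P k * ln (P k / pNS).

Lemma P_ge0 k : 0 <= P k.
Proof. by case: P_semidist => /(_ k) /andP[]. Qed.

Lemma mass_gt0 : 0 < mass P.
Proof. exact: lt_trans pNS_gt0 pNS_lt_mass. Qed.

Lemma mass_le1 : mass P <= 1.
Proof. by case: P_semidist. Qed.

Lemma supp_neq0 : supp != set0.
Proof.
have /eqP mass_neq0 := lt0r_neq0 mass_gt0.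
have [k /andP[_ Pk]] := psumr_neq0P (fun k _ => P_ge0 k) mass_neq0.
by apply/set0Pn; exists k; rewrite inE.
Qed.

Lemma mass_on_ge0 T : 0 <= mass_on T.
Proof. by apply: sumr_ge0 => k _; exact: P_ge0. Qed.

Lemma le_mass_on T k : k \in T -> P k <= mass_on T.
Proof. by apply: ler_sum_mem => l _; exact: P_ge0. Qed.

Lemma mass_on_le_mass T : mass_on T <= mass P.
Proof.
by rewrite /mass_on /mass big_mkcond ler_sum // => k _; case: ifP; rewrite ?P_ge0.
Qed.

Lemma mass_on_gt0 T k : T \subset supp -> k \in T -> 0 < mass_on T.
Proof.
move=> sT kT; apply: lt_le_trans (le_mass_on kT).
by have := subsetP sT k kT; rewrite inE.
Qed.

Lemma KLb_split Q T : T \subset supp -> {in supp :\: T, forall k, Q k <= pNS} ->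
  KLb pNS P Q = \sum_(k in T) P k * ln (P k / Num.max (Q k) pNS)
              + \sum_(k in supp :\: T) P k * ln (P k / pNS).
Proof.
move=> sT Q_le; rewrite /KLb (eq_bigl [in supp]) => [|k]; last by rewrite !inE.
rewrite (big_setID T) /= (setIidPr sT); congr (_ + _).
by apply: eq_bigr => k /Q_le Qk; rewrite max_r.
Qed.

Lemma mass_rescaled T : 0 < mass_on T -> mass (rescaled T) = mass P.
Proof.
by move=> PT0; rewrite /mass /rescaled -big_mkcond -mulr_sumr divfK ?lt0r_neq0.
Qed.

Lemma rescaled_inS T : 0 < mass_on T -> inS P (rescaled T).
Proof.
move=> PT0; have c0 : 0 < mass P / mass_on T by rewrite divr_gt0 ?mass_gt0.
split; [split | split].
- move=> k; rewrite /rescaled; case: ifP => kT; last by rewrite lexx ler01.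
  apply/andP; split; first by apply: mulr_ge0; [exact: ltW | exact: P_ge0].
  apply: le_trans mass_le1; rewrite mulrAC -mulrA ger_pMr ?mass_gt0 //.
  by rewrite ler_pdivrMr // mul1r le_mass_on.
- by rewrite -/(mass _) mass_rescaled ?mass_le1.
- by rewrite mass_rescaled.
- move=> k; rewrite /rescaled; case: ifP => _; last by rewrite ltxx.
  by rewrite pmulr_rgt0.
Qed.

Lemma KLb_rescaled_le T : T \subset supp -> 0 < mass_on T ->
  KLb pNS P (rescaled T) <= klb_bound T.
Proof.
move=> sT PT0; rewrite (KLb_split sT) => [|k]; last first.
  by rewrite inE /rescaled => /andP[/negbTE -> _]; exact: ltW.
rewrite lerD2r /mass_on mulr_suml ler_sum // => k kT.
have Pk : 0 < P k by have := subsetP sT k kT; rewrite inE.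
have Qk : 0 < rescaled T k by rewrite /rescaled kT mulr_gt0 ?divr_gt0 ?mass_gt0.
rewrite ler_wpM2l ?P_ge0 // ler_ln ?posrE ?divr_gt0 ?mass_gt0 ?lt_max ?Qk //.
have -> : mass_on T / mass P = P k / rescaled T k.
  by rewrite /rescaled kT; field; rewrite !lt0r_neq0 ?mass_gt0.
by rewrite ler_wpM2l ?P_ge0 // lef_pV2 ?posrE ?lt_max ?Qk // le_max lexx.
Qed.

Lemma above_sub_supp Q : inS P Q -> above Q \subset supp.
Proof.
case=> _ [_ Q_supp]; apply/subsetP => k; rewrite !inE => Qk.
exact/Q_supp/(lt_trans pNS_gt0 Qk).
Qed.

Lemma inS_ge0 Q : inS P Q -> forall k, 0 <= Q k.
Proof. by case=> [[Q01 _] _] k; case/andP: (Q01 k). Qed.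

Lemma sum_above_le Q : inS P Q -> \sum_(k in above Q) Q k <= mass P.
Proof.
move=> HQ; apply: le_trans (proj1 (proj2 HQ)).
by rewrite /mass big_mkcond ler_sum // => k _; case: ifP; rewrite ?inS_ge0.
Qed.

Lemma KLb_above Q : inS P Q ->
  KLb pNS P Q = \sum_(k in above Q) P k * ln (P k / Q k)
              + \sum_(k in supp :\: above Q) P k * ln (P k / pNS).
Proof.
move=> HQ; rewrite (KLb_split (Q := Q) (above_sub_supp HQ)) => [|k]; last first.
  by rewrite !inE -leNgt => /andP[].
congr (_ + _); apply: eq_bigr => k; rewrite inE => /ltW Qk.
by rewrite max_l.
Qed.

Lemma supp_above Q : inS P Q -> {in above Q, forall k, 0 < P k}.
Proof. by move=> HQ k /(subsetP (above_sub_supp HQ)); rewrite inE. Qed.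

Lemma above_gt0 Q : {in above Q, forall k, 0 < Q k}.
Proof. by move=> k; rewrite inE; exact: lt_trans. Qed.

Lemma klb_bound_le_KLb Q : inS P Q -> klb_bound (above Q) <= KLb pNS P Q.
Proof.
move=> HQ; rewrite (KLb_above HQ) lerD2r.
apply: le_trans (log_sum_ge (supp_above HQ) (@above_gt0 Q)); rewrite -/(mass_on _).
have [T0 | /set0Pn [k kT]] := eqVneq (above Q) set0.
  by rewrite /mass_on T0 big_set0 !mul0r.
rewrite ler_mul_ln_div ?mass_gt0 ?sum_above_le //.
  exact: mass_on_gt0 (above_sub_supp HQ) kT.
exact: psumr_mem_gt0 (@above_gt0 Q) kT.
Qed.

Lemma KLb_le_klb_bound_rescaled Q : inS P Q -> above Q != set0 ->
  KLb pNS P Q <= klb_bound (above Q) -> Q =1 rescaled (above Q).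
Proof.
move=> HQ /set0Pn [k0 k0T]; rewrite (KLb_above HQ) lerD2r.
set T := above Q => le_log_sum.
have PT0 := mass_on_gt0 (above_sub_supp HQ) k0T.
have sum_QT : \sum_(i in T) Q i = mass P.
  apply/eqP; rewrite eq_le sum_above_le //=.
  have := le_trans (log_sum_ge (supp_above HQ) (@above_gt0 Q)) le_log_sum.
  by rewrite -/(mass_on T) ler_mul_ln_div ?mass_gt0 // (psumr_mem_gt0 (@above_gt0 Q) k0T).
have := log_sum_eq (supp_above HQ) (@above_gt0 Q).
rewrite sum_QT -/(mass_on T) => /(_ le_log_sum) QT_prop.
have Q_out : \sum_(i | i \notin T) Q i = 0.
  apply/eqP; rewrite eq_le sumr_ge0 ?andbT => [|i _]; last exact: inS_ge0.
  by have := proj1 (proj2 HQ); rewrite [mass Q]/mass (bigID [in T]) /= sum_QT gerDl.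
move=> k; rewrite /rescaled; case: ifP => kT.
  by apply: (mulIf (lt0r_neq0 PT0)); rewrite QT_prop // mulrAC divfK ?lt0r_neq0 // mulrC.
by apply: (psumr_eq0P (fun i _ => inS_ge0 HQ i) Q_out); rewrite kT.
Qed.

Lemma klb_bound_set1_lt j : j \in supp -> klb_bound [set j] < klb_bound set0.
Proof.
move=> j_supp; have Pj : 0 < P j by move: j_supp; rewrite inE.
rewrite /klb_bound /mass_on big_set0 mul0r add0r big_set1 setD0.
by rewrite [X in _ < X](big_setD1 j) //= ltrD2r ltr_mul_ln_div ?mass_gt0.
Qed.

Lemma klb_bound_setD1_le T k : T \subset supp -> k \in T -> rescaled T k <= pNS ->
  klb_bound (T :\ k) <= klb_bound T.
Proof.
move=> sT kT; rewrite /rescaled kT => le_k.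
have Pk : 0 < P k by have := subsetP sT k kT; rewrite inE.
have PT0 := mass_on_gt0 sT kT.
have mass_onD1 : mass_on T = P k + mass_on (T :\ k) by rewrite /mass_on (big_setD1 k).
have out_D1 : supp :\: (T :\ k) = k |: (supp :\: T).
  by apply/setP => l; rewrite !inE; case: (eqVneq l k) => [->|].
rewrite /klb_bound out_D1 big_setU1 ?inE ?kT //= addrA lerD2r.
rewrite [X in _ <= X * _]mass_onD1 mulrDl addrC lerD //.
  rewrite ler_wpM2l ?P_ge0 // ler_ln ?posrE ?divr_gt0 ?mass_gt0 //.
  move: le_k; rewrite mulrAC ler_pdivrMr // ler_pdivrMr // mulrAC ler_pdivlMr ?mass_gt0 //.
  by rewrite mulrC [_ * pNS]mulrC.
have [->|PD0] := eqVneq (mass_on (T :\ k)) 0; first by rewrite !mul0r.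
have {}PD0 : 0 < mass_on (T :\ k) by rewrite lt0r PD0 mass_on_ge0.
rewrite ler_wpM2l ?mass_on_ge0 // ler_ln ?posrE ?divr_gt0 ?mass_gt0 //.
by rewrite ler_pM2r ?invr_gt0 ?mass_gt0 // mass_onD1 lerDr ltW.
Qed.

Lemma exists_klb_bound_min : exists T,
  [/\ T \subset supp, T != set0, {in T, forall k, pNS < rescaled T k} &
      forall T', T' \subset supp -> klb_bound T <= klb_bound T'].
Proof.
have [T0 sT0 T0_min] : exists2 T0 : {set I}, T0 \subset supp &
    forall T, T \subset supp -> klb_bound T0 <= klb_bound T.
  have [T0 sT0 T0_min] := @arg_minP _ _ _ supp (fun T => T \subset supp) klb_bound (subxx _).
  by exists T0.
(* Among the minimizers pick one of least cardinality: dropping an entry of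
   [rescaled] that is at most [pNS] would give a smaller minimizer. *)
pose is_min T := (T \subset supp) && (klb_bound T == klb_bound T0).
have [|Ts /andP[sTs /eqP fTs] Ts_card] := arg_minnP (fun T => #|T|) (_ : is_min T0).
  by rewrite /is_min sT0 eqxx.
have Ts_min T : T \subset supp -> klb_bound Ts <= klb_bound T by rewrite fTs; exact: T0_min.
exists Ts; split => //.
  apply/eqP => Ts0; have /set0Pn [j j_supp] := supp_neq0.
  by have := klb_bound_set1_lt j_supp; rewrite -Ts0 ltNge Ts_min // sub1set.
move=> k kTs; rewrite ltNge; apply/negP => le_k.
have sD : Ts :\ k \subset supp by apply: subset_trans sTs; exact: subD1set.
have : is_min (Ts :\ k).
  by rewrite /is_min sD -fTs eq_le klb_bound_setD1_le //= Ts_min.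
by move/Ts_card; rewrite [X in (X <= _)%N](cardsD1 k) kTs add1n ltnn.
Qed.

Lemma exists_inS2_KLb_le_klb_bound : exists2 Q, inS2 pNS P Q &
  forall T, T \subset supp -> KLb pNS P Q <= klb_bound T.
Proof.
have [Ts [sTs /set0Pn [k kTs] Ts_gt Ts_min]] := exists_klb_bound_min.
have PT0 := mass_on_gt0 sTs kTs.
exists (rescaled Ts); last first.
  by move=> T sT; apply: le_trans (KLb_rescaled_le sTs PT0) (Ts_min _ sT).
split; [exact: rescaled_inS | split; first exact: mass_rescaled].
move=> j; have [jT _ | jT] := boolP (j \in Ts); first exact: Ts_gt.
by rewrite /rescaled (negbTE jT) ltxx.
Qed.

Lemma exists_inS2_minimizer : exists Q, inS2 pNS P Q /\ is_minimizer pNS P Q.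
Proof.
have [Q S2Q Q_le] := exists_inS2_KLb_le_klb_bound.
exists Q; split=> //; split => [|Q' HQ']; first exact: S2Q.1.
exact: le_trans (Q_le _ (above_sub_supp HQ')) (klb_bound_le_KLb HQ').
Qed.

Lemma minimizer_KLb_le_klb_bound Q : is_minimizer pNS P Q ->
  forall T, T \subset supp -> KLb pNS P Q <= klb_bound T.
Proof.
case=> _ Q_min T sT; have [Q0 [HQ0 _] Q0_le] := exists_inS2_KLb_le_klb_bound.
exact: le_trans (Q_min _ HQ0) (Q0_le _ sT).
Qed.

Lemma minimizerE Q : is_minimizer pNS P Q ->
  above Q != set0 /\ Q =1 rescaled (above Q).
Proof.
move=> Q_min; have HQ := Q_min.1; have le_bound := minimizer_KLb_le_klb_bound Q_min.
have nT : above Q != set0.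
  apply/eqP => T0; have /set0Pn [j j_supp] := supp_neq0.
  have := klb_bound_set1_lt j_supp; rewrite -T0 ltNge.
  by rewrite (le_trans (klb_bound_le_KLb HQ)) ?le_bound // sub1set.
by split; last exact: KLb_le_klb_bound_rescaled HQ nT (le_bound _ (above_sub_supp HQ)).
Qed.

Lemma minimizer_gt0_above Q j : is_minimizer pNS P Q -> 0 < Q j -> j \in above Q.
Proof.
move=> /minimizerE [_ QE]; apply: contraTT => jT.
by rewrite QE /rescaled (negbTE jT) ltxx.
Qed.

Lemma minimizer_inS2 Q : is_minimizer pNS P Q -> inS2 pNS P Q.
Proof.
move=> Q_min; have [/set0Pn [k kT] QE] := minimizerE Q_min.
split; first exact: Q_min.1.
split; last by move=> j /(minimizer_gt0_above Q_min); rewrite inE.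
have -> : mass Q = mass (rescaled (above Q)) by apply: eq_bigr => j _; exact: QE.
exact/mass_rescaled/(mass_on_gt0 (above_sub_supp Q_min.1) kT).
Qed.

Lemma minimizer_scaled Q : is_minimizer pNS P Q ->
  exists r, 1 <= r /\ forall i, 0 < Q i -> Q i = r * P i.
Proof.
move=> Q_min; have [/set0Pn [k kT] QE] := minimizerE Q_min.
have PT0 := mass_on_gt0 (above_sub_supp Q_min.1) kT.
exists (mass P / mass_on (above Q)); split.
  by rewrite ler_pdivlMr // mul1r mass_on_le_mass.
by move=> i /(minimizer_gt0_above Q_min) iT; rewrite QE /rescaled iT.
Qed.

Lemma inS_tperm Q i j : inS P Q -> 0 < P i -> 0 < P j -> inS P (Q \o tperm i j).
Proof.
move=> [[Q01 sumQ_le1] [massQ_le Q_supp]] Pi Pj.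
have mass_perm : mass (Q \o tperm i j) = mass Q.
  by rewrite /mass [RHS](reindex_inj (h := tperm i j) perm_inj).
split; [split => [k|] | split => [|k /=]]; first exact: Q01.
- by rewrite -/(mass _) mass_perm.
- by rewrite mass_perm.
by case: tpermP => [-> _|-> _|_ _ /Q_supp].
Qed.

Lemma minimizer_gt0_mono Q i j : is_minimizer pNS P Q -> P i < P j -> 0 < Q i -> 0 < Q j.
Proof.
move=> Q_min lt_ij Qi0; have [HQ Q_le] := Q_min.
rewrite lt0r inS_ge0 // andbT; apply/eqP => Qj0.
have Qi : pNS < Q i by move: (minimizer_gt0_above Q_min Qi0); rewrite inE.
have Pi : 0 < P i := HQ.2.2 i Qi0.
have Pj := lt_trans Pi lt_ij.
have ij : i != j by apply: contraTneq lt_ij => ->; rewrite ltxx.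
set Q' := Q \o tperm i j.
have := Q_le _ (inS_tperm HQ Pi Pj); apply/negP; rewrite -ltNge -subr_lt0.
pose g Q0 k := if 0 < P k then P k * ln (P k / Num.max (Q0 k) pNS) else 0.
have KLbE Q0 : KLb pNS P Q0 = \sum_k g Q0 k by rewrite /KLb big_mkcond.
rewrite !KLbE -sumrB (bigD1 i) // (bigD1 j) 1?eq_sym //= big1 => [|k /andP[ki kj]].
  rewrite /g /Q' /= tpermL tpermR Pi Pj Qj0 addr0.
  rewrite (max_r (ltW pNS_gt0)) (max_l (ltW Qi)).
  have : 0 < (P j - P i) * (ln (Q i) - ln pNS) by rewrite mulr_gt0 // subr_gt0 ?ltr_ln ?posrE.
  rewrite !ln_div ?posrE //; nra.
by rewrite /g /Q' /= tpermD 1?eq_sym // subrr.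
Qed.

End Minimizers.

Theorem lemma8 (R : realType) (I : finType) (pNS : R) (P : I -> R) :
  0 < pNS < 1 -> semidist P -> pNS < mass P ->
  (* (1) *)
  ((forall Q1 : I -> R, inS P Q1 -> (exists i, 0 < Q1 i <= pNS) ->
      exists Q2 : I -> R, inS P Q2 /\ (forall j, 0 < Q2 j -> pNS < Q2 j) /\
        KLb pNS P Q2 < KLb pNS P Q1)
   /\ (forall Q1 : I -> R, inS P Q1 ->
        exists Q2 : I -> R, inS2 pNS P Q2 /\ KLb pNS P Q2 <= KLb pNS P Q1)
   /\ (exists Q : I -> R, inS2 pNS P Q))
  /\
  (* (2) *)
  ((exists Q : I -> R, is_minimizer pNS P Q)
   /\ (forall Q : I -> R, is_minimizer pNS P Q ->
        inS2 pNS P Q /\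
        exists r : R, 1 <= r /\ forall i, 0 < Q i -> Q i = r * P i))
  /\
  (* (3) *)
  (forall Q : I -> R, is_minimizer pNS P Q ->
     forall i j, P i < P j -> 0 < Q i -> 0 < Q j /\ Q i < Q j).
Proof.
move=> /andP[pNS_gt0 _] P_semidist pNS_lt_mass.
have [Q0 [S2Q0 [HQ0 Q0_le]]] := exists_inS2_minimizer pNS_gt0 P_semidist pNS_lt_mass.
have min_inS2 := minimizer_inS2 pNS_gt0 P_semidist pNS_lt_mass.
have min_scaled := minimizer_scaled pNS_gt0 P_semidist pNS_lt_mass.
split; [split; [|split] | split; [split|]].
- move=> Q1 HQ1 [i /andP[Q1i_gt0 Q1i_le]]; exists Q0.
  split; first exact: HQ0.
  split; first exact: S2Q0.2.2.
  rewrite ltNge; apply/negP => Q1_le.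
  have Q1_min : is_minimizer pNS P Q1.
    by split=> // Q' /Q0_le; exact: le_trans.
  by have := (min_inS2 _ Q1_min).2.2 i Q1i_gt0; rewrite ltNge Q1i_le.
- by move=> Q1 /Q0_le Q0_le1; exists Q0.
- by exists Q0.
- by exists Q0.
- by move=> Q Q_min; split; [exact: min_inS2 | exact: min_scaled].
move=> Q Q_min i j lt_ij Qi_gt0.
have Qj_gt0 := minimizer_gt0_mono pNS_gt0 P_semidist pNS_lt_mass Q_min lt_ij Qi_gt0.
have [r [r_ge1 QE]] := min_scaled _ Q_min.
split=> //; rewrite (QE i) // (QE j) // ltr_pM2l //.
exact: lt_le_trans ltr01 r_ge1.
Qed.
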